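(* Let $\{G_i: i\in I\}$ be a family of (Hausdorff) topological groups and let $G=\prod_{i\in I}G_i$ be their product with the Tychonoff product topology. If $G$ is $g$-reversible, then every factor $G_i$ is $g$-reversible.
   Context: All topological groups are assumed Hausdorff. A topological group $G$ is called $g$-reversible if every continuous automorphism of $G$ (i.e. every continuous group isomorphism of $G$ onto itself) is an open map. *)

From Stdlib Require Import List.
Set Implicit Arguments.

Record TopGroup := {
  tg_car :> Type;
  tg_mul : tg_car -> tg_car -> tg_car;
  tg_one : tg_car;
  tg_inv : tg_car -> tg_car;
  tg_open : (tg_car -> Prop) -> Prop;
  tg_mulA : forall x y z, tg_mul x (tg_mul y z) = tg_mul (tg_mul x y) z;
  tg_mul1 : forall x, tg_mul tg_one x = x;
  tg_mulV : forall x, tg_mul (tg_inv x) x = tg_one;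
  tg_open_ext : forall U V : tg_car -> Prop,
      (forall x, U x <-> V x) -> tg_open U -> tg_open V;
  tg_open_full : tg_open (fun _ => True);
  tg_open_inter : forall U V, tg_open U -> tg_open V ->
      tg_open (fun x => U x /\ V x);
  tg_open_union : forall F : (tg_car -> Prop) -> Prop,
      (forall U, F U -> tg_open U) ->
      tg_open (fun x => exists U, F U /\ U x);
  (* continuity of multiplication (w.r.t. the product topology on G x G) *)
  tg_mul_cont : forall U x y, tg_open U -> U (tg_mul x y) ->
      exists V W, tg_open V /\ tg_open W /\ V x /\ W y /\
        (forall a b, V a -> W b -> U (tg_mul a b));
  tg_inv_cont : forall U, tg_open U -> tg_open (fun x => U (tg_inv x));
  tg_hausdorff : forall x y : tg_car, x <> y ->
      exists U V, tg_open U /\ tg_open V /\ U x /\ V y /\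
        (forall z, U z -> V z -> False)
}.

Definition continuous_map (T : Type) (opn : (T -> Prop) -> Prop) (f : T -> T) :=
  forall U, opn U -> opn (fun x => U (f x)).

Definition open_map (T : Type) (opn : (T -> Prop) -> Prop) (f : T -> T) :=
  forall U, opn U -> opn (fun y => exists x, U x /\ y = f x).

Definition cont_automorphism (T : Type) (mul : T -> T -> T)
    (opn : (T -> Prop) -> Prop) (f : T -> T) :=
  (forall x y, f (mul x y) = mul (f x) (f y)) /\
  (forall x y, f x = f y -> x = y) /\
  (forall y, exists x, f x = y) /\
  continuous_map opn f.

Definition g_reversible_data (T : Type) (mul : T -> T -> T)
    (opn : (T -> Prop) -> Prop) :=
  forall f : T -> T, cont_automorphism mul opn f -> open_map opn f.

Definition g_reversible (G : TopGroup) :=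
  g_reversible_data (@tg_mul G) (@tg_open G).

(** Product of a family of topological groups: pointwise multiplication and
    the Tychonoff product topology (U is open iff every point of U has a basic
    neighbourhood, i.e. a finite intersection of open cylinders, inside U). *)
Definition prod_mul (I : Type) (G : I -> TopGroup)
    (x y : forall i, tg_car (G i)) : forall i, tg_car (G i) :=
  fun i => tg_mul (G i) (x i) (y i).

Definition prod_open (I : Type) (G : I -> TopGroup)
    (U : (forall i, tg_car (G i)) -> Prop) : Prop :=
  forall x, U x ->
    exists (l : list I) (V : forall i, tg_car (G i) -> Prop),
      (forall i, In i l -> tg_open (G i) (V i)) /\
      (forall i, In i l -> V i (x i)) /\
      (forall y : forall i, tg_car (G i), (forall i, In i l -> V i (y i)) -> U y).

(** Extend an automorphism [f] of [G i] to the product by letting it act on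
    the [i]-th coordinate only.  This extension is a continuous automorphism of
    the product, hence open; restricted to the slice through the identity
    along the [i]-th axis, the image of the open cylinder over [U] is exactly
    [f(U)], and slices of open sets of the product are open in [G i]. *)

From Stdlib Require Import List.
From Stdlib Require Import Classical ClassicalEpsilon FunctionalExtensionality ProofIrrelevance.

Definition update {I : Type} {A : I -> Type} (x : forall j, A j) (i : I) (a : A i) :
  forall j, A j := fun j =>
  match excluded_middle_informative (i = j) with
  | left e => eq_rect i A a j e
  | right _ => x j
  end.

Lemma update_eq {I : Type} {A : I -> Type} (x : forall j, A j) i a :
  update x i a i = a.
Proof.
  unfold update. destruct (excluded_middle_informative (i = i)) as [e|n].
  - rewrite (proof_irrelevance _ e eq_refl). reflexivity.
  - contradiction n. reflexivity.
Qed.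

Lemma update_neq {I : Type} {A : I -> Type} (x : forall j, A j) i a j :
  i <> j -> update x i a j = x j.
Proof.
  intro n. unfold update.
  destruct (excluded_middle_informative (i = j)); [contradiction | reflexivity].
Qed.

Lemma update_update {I : Type} {A : I -> Type} (x : forall j, A j) i a b :
  update (update x i a) i b = update x i b.
Proof.
  apply functional_extensionality_dep; intro j.
  destruct (classic (i = j)) as [<-|n].
  - rewrite !update_eq. reflexivity.
  - rewrite !update_neq by exact n. reflexivity.
Qed.

Lemma update_id {I : Type} {A : I -> Type} (x : forall j, A j) i :
  update x i (x i) = x.
Proof.
  apply functional_extensionality_dep; intro j.
  destruct (classic (i = j)) as [<-|n].
  - apply update_eq.
  - apply update_neq, n.
Qed.

Lemma tg_open_const (G : TopGroup) (P : Prop) : tg_open G (fun _ => P).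
Proof.
  destruct (classic P) as [hP|hP].
  - apply tg_open_ext with (U := fun _ => True); [tauto | apply tg_open_full].
  - apply tg_open_ext with (U := fun x => exists U, False /\ U x).
    + intro x; split; [intros [U [[] _]] | contradiction].
    + apply tg_open_union. intros U [].
Qed.

Lemma tg_open_finite_inter (G : TopGroup) (J : Type) (l : list J)
    (O : J -> G -> Prop) :
  (forall k, In k l -> tg_open G (O k)) ->
  tg_open G (fun c => forall k, In k l -> O k c).
Proof.
  induction l as [|h l IH]; intro hO.
  - apply tg_open_ext with (U := fun _ => True); [|apply tg_open_full].
    intro c; split; [intros _ k [] | auto].
  - apply tg_open_ext with (U := fun c => O h c /\ (forall k, In k l -> O k c)).
    + intro c; split.
      * intros [h1 h2] k [<-|hk]; auto.
      * intro hc; split; [apply hc; left | intros k hk; apply hc; right]; auto.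
    + apply tg_open_inter; [apply hO; left; reflexivity |].
      apply IH. intros k hk; apply hO; right; exact hk.
Qed.

Lemma tg_open_of_nbhds (G : TopGroup) (S : G -> Prop) :
  (forall c, S c -> exists N, tg_open G N /\ N c /\ (forall d, N d -> S d)) ->
  tg_open G S.
Proof.
  intro hS.
  apply tg_open_ext with
    (U := fun c => exists N, (tg_open G N /\ forall d, N d -> S d) /\ N c).
  - intro c; split.
    + intros [N [[_ hN] hc]]. auto.
    + intro hc. destruct (hS c hc) as [N [hN [hNc hNS]]]. eauto.
  - apply tg_open_union. intros N [hN _]. exact hN.
Qed.

Section ProductTopology.

Context {I : Type} (G : I -> TopGroup) (i : I).

Lemma prod_open_cylinder (U : G i -> Prop) :
  tg_open (G i) U -> prod_open G (fun x => U (x i)).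
Proof.
  intros hU x hx.
  exists (i :: nil), (update (fun j (_ : G j) => True) i U).
  split; [|split].
  - intros k [<-|[]]. rewrite update_eq. exact hU.
  - intros k [<-|[]]. rewrite update_eq. exact hx.
  - intros y hy. specialize (hy i (or_introl eq_refl)).
    rewrite update_eq in hy. exact hy.
Qed.

Lemma tg_open_slice_component (p : forall j, G j) (k : I) (V : G k -> Prop) :
  tg_open (G k) V -> tg_open (G i) (fun c => V (update p i c k)).
Proof.
  intro hV. destruct (classic (i = k)) as [<-|n].
  - apply tg_open_ext with (U := V); [intro c; rewrite update_eq; tauto | exact hV].
  - apply tg_open_ext with (U := fun _ => V (p k)); [|apply tg_open_const].
    intro c; rewrite update_neq by exact n; tauto.
Qed.

Lemma prod_open_slice (W : (forall j, G j) -> Prop) (p : forall j, G j) :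
  prod_open G W -> tg_open (G i) (fun c => W (update p i c)).
Proof.
  intro hW. apply tg_open_of_nbhds. intros c hc.
  destruct (hW _ hc) as [l [V [hVopen [hVc hVW]]]].
  exists (fun d => forall k, In k l -> V k (update p i d k)).
  split; [|split].
  - apply tg_open_finite_inter. intros k hk.
    apply tg_open_slice_component, hVopen, hk.
  - exact hVc.
  - intros d hd. apply hVW, hd.
Qed.

End ProductTopology.

Section Extension.

Context {I : Type} (G : I -> TopGroup) (i : I) (f : G i -> G i).

Definition extend_at (x : forall j, G j) : forall j, G j := update x i (f (x i)).

Lemma extend_at_eq x : extend_at x i = f (x i).
Proof. exact (update_eq x i _). Qed.

Lemma extend_at_neq x j : i <> j -> extend_at x j = x j.
Proof. exact (update_neq x i _ j). Qed.

Lemma extend_at_image_slice (p : forall j, G j) (U : G i -> Prop) (c : G i) :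
  (exists x, U (x i) /\ update p i c = extend_at x) <-> (exists a, U a /\ c = f a).
Proof.
  split.
  - intros [x [hx e]]. exists (x i). split; [exact hx|].
    apply (f_equal (fun y => y i)) in e.
    rewrite update_eq, extend_at_eq in e. exact e.
  - intros [a [ha ->]]. exists (update p i a).
    rewrite update_eq. split; [exact ha|].
    unfold extend_at. rewrite update_eq, update_update. reflexivity.
Qed.

Hypothesis f_aut : cont_automorphism (@tg_mul (G i)) (@tg_open (G i)) f.

Lemma extend_at_morph x y :
  extend_at (prod_mul G x y) = prod_mul G (extend_at x) (extend_at y).
Proof.
  destruct f_aut as [f_morph _].
  apply functional_extensionality_dep; intro j. unfold prod_mul.
  destruct (classic (i = j)) as [<-|n].
  - rewrite !extend_at_eq. apply f_morph.
  - rewrite !extend_at_neq by exact n. reflexivity.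
Qed.

Lemma extend_at_inj x y : extend_at x = extend_at y -> x = y.
Proof.
  destruct f_aut as [_ [f_inj _]]. intro e.
  apply functional_extensionality_dep; intro j.
  destruct (classic (i = j)) as [<-|n].
  - apply f_inj. rewrite <- !extend_at_eq, e. reflexivity.
  - rewrite <- (extend_at_neq x j n), <- (extend_at_neq y j n), e. reflexivity.
Qed.

Lemma extend_at_surj y : exists x, extend_at x = y.
Proof.
  destruct f_aut as [_ [_ [f_surj _]]].
  destruct (f_surj (y i)) as [a ha].
  exists (update y i a). unfold extend_at.
  rewrite update_eq, update_update, ha.
  apply update_id.
Qed.

Lemma extend_at_continuous : continuous_map (@prod_open I G) extend_at.
Proof.
  destruct f_aut as [_ [_ [_ f_cont]]].
  intros U hU x hx. destruct (hU _ hx) as [l [V [hVopen [hVx hVU]]]].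
  exists l, (update V i (fun a => V i (f a))).
  split; [|split].
  - intros k hk. destruct (classic (i = k)) as [<-|n].
    + rewrite update_eq. apply f_cont, hVopen, hk.
    + rewrite update_neq by exact n. apply hVopen, hk.
  - intros k hk. destruct (classic (i = k)) as [<-|n].
    + rewrite update_eq, <- extend_at_eq. apply hVx, hk.
    + rewrite update_neq, <- (extend_at_neq x k n) by exact n. apply hVx, hk.
  - intros y hy. apply hVU. intros k hk. specialize (hy k hk).
    destruct (classic (i = k)) as [<-|n].
    + rewrite update_eq in hy. rewrite extend_at_eq. exact hy.
    + rewrite update_neq in hy by exact n. rewrite extend_at_neq by exact n. exact hy.
Qed.

Lemma extend_at_cont_automorphism :
  cont_automorphism (@prod_mul I G) (@prod_open I G) extend_at.
Proof.
  split; [|split; [|split]].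
  - exact extend_at_morph.
  - exact extend_at_inj.
  - exact extend_at_surj.
  - exact extend_at_continuous.
Qed.

End Extension.

Theorem theorem9p1 (I : Type) (G : I -> TopGroup) :
  g_reversible_data (@prod_mul I G) (@prod_open I G) ->
  forall i : I, g_reversible (G i).
Proof.
  intros H i f f_aut U hU.
  assert (hFW : prod_open G (fun y => exists x, U (x i) /\ y = extend_at G i f x)).
  { apply (H _ (extend_at_cont_automorphism G i f f_aut)).
    apply prod_open_cylinder, hU. }
  apply (tg_open_ext (G i)) with
    (U := fun c => exists x, U (x i) /\ update (fun j => tg_one (G j)) i c = extend_at G i f x).
  - intro c. apply extend_at_image_slice.
  - apply (prod_open_slice G i _ _ hFW).
Qed.
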